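(* Let $\pi$ be a permutation-invariant probability density on $\mathbb{X}^n$ and $q$ a probability density on $\mathbb{X}$. For any $x\in\mathbb{X}^n$ and $y\in\mathbb{X}$, $$\sum_{i=1}^n\frac{w_i(y,x)}{W(y,x)}\,\alpha_i^{\mathrm{SOMA}}(y,x)\;\ge\;\sum_{i=1}^n\frac1n\,\alpha_i^{\mathrm{IMwG}}(y,x).$$
   Context: Permutation invariance: $\pi(x_{\sigma(1)},\dots,x_{\sigma(n)})=\pi(x)$ for all permutations $\sigma$. $[x_{-i},y]$ is $x$ with its $i$-th component replaced by $y$. Weights: $w_i(y,x)=\pi([x_{-i},y])/\big(q(y)\prod_{j\ne i}q(x_j)\big)$ ($1\le i\le n$), $w_0(y,x)=\pi(x)/\prod_j q(x_j)$, $W(y,x)=\sum_{i=1}^n w_i(y,x)$ (well-defined, positive). $\alpha_i^{\mathrm{SOMA}}(y,x)=\min\{1,W/(W+w_0-w_i)\}$ and $\alpha_i^{\mathrm{IMwG}}(y,x)=\min\{1,w_i(y,x)/w_0(y,x)\}$. *)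

From HB Require Import structures.
From mathcomp Require Import all_boot all_order all_algebra all_fingroup.
Set Implicit Arguments. Unset Strict Implicit. Unset Printing Implicit Defensive.
Import Order.TTheory GRing.Theory Num.Theory.
Local Open Scope ring_scope.

Section Weights.
Variables (R : realFieldType) (X : Type) (n : nat).
Variables (pi : ('I_n -> X) -> R) (q : X -> R).

Definition perm_invariant : Prop :=
  forall (s : 'S_n) (x : 'I_n -> X), pi (fun k => x (s k)) = pi x.

Definition repl (x : 'I_n -> X) (i : 'I_n) (y : X) : 'I_n -> X :=
  fun j => if j == i then y else x j.

Definition w_i (i : 'I_n) (y : X) (x : 'I_n -> X) : R :=
  pi (repl x i y) / (q y * \prod_(j < n | j != i) q (x j)).

Definition w_0 (y : X) (x : 'I_n -> X) : R :=
  pi x / \prod_(j < n) q (x j).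

Definition W (y : X) (x : 'I_n -> X) : R := \sum_(i < n) w_i i y x.

Definition alpha_SOMA (i : 'I_n) (y : X) (x : 'I_n -> X) : R :=
  Num.min 1 (W y x / (W y x + w_0 y x - w_i i y x)).

Definition alpha_IMwG (i : 'I_n) (y : X) (x : 'I_n -> X) : R :=
  Num.min 1 (w_i i y x / w_0 y x).
End Weights.

(** Only the positivity of the weights matters.  Write [a_i = w_i], [b = w_0], [S = sum_i a_i],
    [C = sum_i min(a_i, b)], [N = n b] and [M = sum_i max(a_i, b)], so that
    [C + M = S + N].  The IMwG side equals [C / N].  Since [S + b - a_i <= M],
    each SOMA acceptance probability is at least [S / M], so the SOMA side is
    at least [S / M = S / (S + N - C)].  Finally
    [S N - C (S + N - C) = (N - C) (S - C) >= 0] because [C <= S] and [C <= N]. *)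

From HB Require Import structures.
From mathcomp Require Import all_boot all_order all_algebra all_fingroup.
From mathcomp Require Import lra.
Import Order.TTheory GRing.Theory Num.Theory.
Set Implicit Arguments. Unset Strict Implicit.
Local Open Scope ring_scope.

Section ScalarInequalities.
Variable R : realFieldType.
Implicit Types a b c s m nb : R.

Lemma min1_div a b : 0 < b -> Num.min 1 (a / b) = Num.min a b / b.
Proof. by move=> b_gt0; rewrite minr_pMl ?invr_ge0 ?ltW // divff ?gt_eqF // minC. Qed.

Lemma div_le_mul_min1_div a s b m :
  0 < a -> a <= s -> 0 < b -> s <= m -> s + b - a <= m ->
  a / m <= a / s * Num.min 1 (s / (s + b - a)).
Proof.
move=> a_gt0 a_le_s b_gt0 s_le_m den_le_m.
have s_gt0 : 0 < s by apply: lt_le_trans a_le_s.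
have m_gt0 : 0 < m by apply: lt_le_trans s_le_m.
have den_gt0 : 0 < s + b - a by lra.
have s_le_min : s / m <= Num.min 1 (s / (s + b - a)).
  rewrite le_min ler_pdivrMr // mul1r s_le_m /=.
  by rewrite ler_pdivrMr // mulrAC ler_pdivlMr // ler_pM2l.
have -> : a / m = a / s * (s / m) by rewrite mulrA divfK // lt0r_neq0.
by rewrite ler_wpM2l // divr_ge0 // ltW.
Qed.

Lemma div_le_div_add_sub c s nb :
  0 < c -> c <= s -> c <= nb -> c / nb <= s / (s + nb - c).
Proof.
move=> c_gt0 c_le_s c_le_nb.
have nb_gt0 : 0 < nb by apply: lt_le_trans c_le_nb.
have den_gt0 : 0 < s + nb - c by lra.
rewrite ler_pdivrMr // mulrAC ler_pdivlMr //.
have : 0 <= (nb - c) * (s - c) by rewrite mulr_ge0 // subr_ge0.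
nra.
Qed.

End ScalarInequalities.

Lemma mean_min1_div_le_weighted_min1 (R : realFieldType) (n : nat)
    (a : 'I_n -> R) (b : R) :
  (forall i, 0 < a i) -> 0 < b ->
  \sum_(i < n) n%:R^-1 * Num.min 1 (a i / b) <=
  \sum_(i < n) (a i / \sum_(j < n) a j) *
    Num.min 1 ((\sum_(j < n) a j) / ((\sum_(j < n) a j) + b - a i)).
Proof.
case: n a => [|n] a a_gt0 b_gt0; first by rewrite !big_ord0.
set S := \sum_(j < n.+1) a j.
set C := \sum_(j < n.+1) Num.min (a j) b.
set M := \sum_(j < n.+1) Num.max (a j) b.
set N := n.+1%:R * b.
have N_sum : N = \sum_(j < n.+1) b by rewrite /N sumr_const card_ord mulr_natl.
have CM : C + M = S + N.
  rewrite /C /M /S N_sum -!big_split /=.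
  by apply: eq_bigr => j _; rewrite addr_min_max.
have a_le_S i : a i <= S.
  by rewrite /S (bigD1 i) //= lerDl sumr_ge0 // => j _; apply: ltW.
have C_le_S : C <= S by apply: ler_sum => j _; rewrite ge_min lexx.
have C_le_N : C <= N by rewrite N_sum; apply: ler_sum => j _; rewrite ge_min lexx orbT.
have C_gt0 : 0 < C.
  rewrite /C (bigD1 ord0) //= ltr_pwDl ?lt_min ?a_gt0 //.
  by apply: sumr_ge0 => j _; rewrite le_min !ltW.
have S_le_M : S <= M by apply: ler_sum => j _; rewrite le_max lexx.
have den_le_M i : S + b - a i <= M.
  rewrite /S /M (bigD1 i) // (bigD1 i (P := predT)) //=.
  have : \sum_(j < n.+1 | j != i) a j <= \sum_(j < n.+1 | j != i) Num.max (a j) b.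
    by apply: ler_sum => j _; rewrite le_max lexx.
  have : b <= Num.max (a i) b by rewrite le_max lexx orbT.
  lra.
have -> : \sum_(i < n.+1) n.+1%:R^-1 * Num.min 1 (a i / b) = C / N.
  by rewrite mulr_suml; apply: eq_bigr => i _; rewrite min1_div // invfM mulrCA.
apply: le_trans (div_le_div_add_sub C_gt0 C_le_S C_le_N) _.
have -> : S + N - C = M by lra.
rewrite {1}/S mulr_suml; apply: ler_sum => i _.
exact: div_le_mul_min1_div.
Qed.

Theorem lemma3 (R : realFieldType) (X : Type) (n : nat)
  (pi : ('I_n -> X) -> R) (q : X -> R)
  (pi_pos : forall z : 'I_n -> X, 0 < pi z)
  (q_pos : forall u : X, 0 < q u)
  (pi_sym : perm_invariant pi)
  (x : 'I_n -> X) (y : X) :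
  \sum_(i < n) (w_i pi q i y x / W pi q y x) * alpha_SOMA pi q i y x
  >= \sum_(i < n) n%:R^-1 * alpha_IMwG pi q i y x.
Proof.
have w_i_gt0 i : 0 < w_i pi q i y x.
  by rewrite divr_gt0 // mulr_gt0 // prodr_gt0.
have w_0_gt0 : 0 < w_0 pi q y x by rewrite divr_gt0 // prodr_gt0.
exact: mean_min1_div_le_weighted_min1 w_i_gt0 w_0_gt0.
Qed.
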